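(* Let $D$ be a knot diagram, let $2\le k\le\infty$, and let $M$ be the game matrix of some version of the $k$-color region select game on $D$. If $\boldsymbol\ell$ is a null pattern of $M$ with $\boldsymbol\ell(r_1)=\boldsymbol\ell(r_2)=0$ for two adjacent regions $r_1,r_2$ of $D$, then $\boldsymbol\ell=\mathbf 0$.
   Context: Diagrams: a link (knot) diagram $D$ is the underlying graph of a regular projection of a link (knot) into $S^2$. Its vertices are the crossings, each of valence 4, and over/under information is ignored. Components without crossings are closed loops, each regarded as one edge with no vertices. Regions of $D$ are the connected components of $S^2\setminus D$. A vertex or edge is incident to a region if it lies in the boundary of that region. Two regions are adjacent if they are incident to a common edge. A vertex $v$ is reducible if some circle in $S^2$ meets $D$ transversely only at $v$, and irreducible otherwise. An irreducible vertex is incident to four distinct regions. A reducible vertex $v$ is incident to exactly three regions $r_0,r_1,r_2$, where $r_0$ touches $v$ from two sides and $r_1,r_2$ touch it from one side. A knot diagram with $n$ vertices has $n+2$ regions. A knot diagram is reduced if all its vertices are irreducible. Ring: for an integer $k\ge2$ let $\mathbb{Z}_k=\mathbb{Z}/k\mathbb{Z}$, and for $k=\infty$ let $\mathbb{Z}_\infty=\mathbb{Z}$. Game versions: a version of the $k$-color region select game on $D$ is a choice of an increment number $a(v,r)\in\mathbb{Z}_k$ for every incident vertex–region pair, subject to the following rules. - If $k<\infty$ and $v$ is irreducible, then $a(v,r)=a_v$ is the same for all regions $r$ incident to $v$, and $a_v$ is not a zero divisor of $\mathbb{Z}_k$. - If $k<\infty$ and $v$ is reducible, then $a(v,r_0)$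 is arbitrary, while $a(v,r_1)$ and $a(v,r_2)$ are not zero divisors. - If $k=\infty$, then $a(v,r)=1$, except that $a(v,r_0)\in\mathbb{Z}$ is arbitrary when $v$ is reducible. - The original game is the version in which all increment numbers equal $1$. Game matrix: enumerate the vertices as $v_1,\dots,v_n$ and the regions as $r_1,\dots,r_m$. The game matrix is the $n\times m$ matrix $M$ over $\mathbb{Z}_k$ with $M_{ij}=a(v_i,r_j)$ if $v_i$ is incident to $r_j$, and $M_{ij}=0$ otherwise. Patterns and configurations: a push pattern is a vector $\mathbf p\in\mathbb{Z}_k^m$, and $\mathbf p(r_j)=p_j$ is the number of times $r_j$ is pushed. A region $r$ is not pushed in $\mathbf p$ if $\mathbf p(r)=0$. A color configuration is a vector $\mathbf c\in\mathbb{Z}_k^n$. Applying $\mathbf p$ to $\mathbf c$ yields $\mathbf c+M\mathbf p$. The configuration $\mathbf c$ is solvable if some $\mathbf p$ satisfies $M\mathbf p=-\mathbf c$; such a $\mathbf p$ is a solving pattern for $\mathbf c$. $D$ is always solvable in the version if every $\mathbf c\in\mathbb{Z}_k^n$ is solvable. A null pattern is an element of $Ker_k(M)=\{\mathbf p\in\mathbb{Z}_k^m: M\mathbf p=0\}$. *)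

(* Combinatorial model of a knot diagram as a 4-regular
   combinatorial map (rotation system) on the sphere. *)
From HB Require Import structures.
From mathcomp Require Import all_boot all_order all_algebra all_fingroup.
Set Implicit Arguments. Unset Strict Implicit. Unset Printing Implicit Defensive.
Import Order.TTheory GRing.Theory Num.Theory.
Local Open Scope ring_scope.

Inductive kcol := Kfin of nat | Kinf.

Definition Zk (k : kcol) : comUnitRingType :=
  match k with Kfin n => 'Z_n | Kinf => int end.

Definition valid_k (k : kcol) : Prop :=
  match k with Kfin n => (2 <= n)%N | Kinf => True end.

(* Raw diagram data: darts (half-edges at crossings), the rotation sigma
   around each vertex, the involution alpha pairing the two ends of an edge,
   and the labelling of darts by vertices (sigma-orbits) and by regions
   (orbits of the face permutation phi = alpha \o sigma; dart h stands for the
   corner between h and sigma h). *)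
Record diagram := Diagram {
  dart : finType;
  vtx : finType;
  reg : finType;
  sigma : {perm dart};
  alpha : {perm dart};
  vof : dart -> vtx;
  rof : dart -> reg
}.

Section Diag.
Variable D : diagram.

Definition phi (h : dart D) : dart D := alpha D (sigma D h).
(* straight-ahead continuation of the curve through a crossing *)
Definition tau (h : dart D) : dart D := sigma D (sigma D (alpha D h)).

Definition knot_diagram : Prop :=
  (forall h, alpha D (alpha D h) = h /\ alpha D h != h) /\
  (forall h, iter 4 (sigma D) h = h /\ sigma D h != h /\ iter 2 (sigma D) h != h) /\
  (forall h h', vof h = vof h' <-> fconnect (sigma D) h h') /\
  (forall v : vtx D, exists h, vof h = v) /\
  (forall h h', rof h = rof h' <-> fconnect phi h h') /\
  (forall r : reg D, exists h, rof h = r) /\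
  (* one component: the straight-ahead walk from h0 traverses every edge *)
  (exists h0, forall h, fconnect tau h0 h \/ fconnect tau h0 (alpha D h)) /\
  (* Euler formula V - E + F = 2 (the map lies on the sphere) *)
  (#|vtx D| + #|reg D| = #|dart D| %/ 2 + 2)%N.

Definition incident (v : vtx D) (r : reg D) : bool :=
  [exists h, (vof h == v) && (rof h == r)].

Definition ncorners (v : vtx D) (r : reg D) : nat :=
  #|[set h | (vof h == v) && (rof h == r)]|.

Definition irreducible (v : vtx D) : Prop :=
  forall h h', vof h = v -> vof h' = v -> rof h = rof h' -> h = h'.

Definition adjacent (r1 r2 : reg D) : Prop :=
  exists h, rof h = r1 /\ rof (alpha D h) = r2.

Definition not_zero_divisor (R : comUnitRingType) (x : R) : Prop :=
  forall y : R, x * y = 0 -> y = 0.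

Definition is_version (k : kcol) (a : vtx D -> reg D -> Zk k) : Prop :=
  match k return (vtx D -> reg D -> Zk k) -> Prop with
  | Kfin n => fun a =>
      forall v,
        (irreducible v ->
           exists av : Zk (Kfin n), not_zero_divisor av /\
             forall r, incident v r -> a v r = av) /\
        (~ irreducible v ->
           forall r, incident v r -> ncorners v r = 1%N ->
             not_zero_divisor (a v r))
  | Kinf => fun a =>
      forall v r, incident v r -> (irreducible v \/ ncorners v r = 1%N) ->
        a v r = 1
  end a.

Definition game_matrix (k : kcol) (a : vtx D -> reg D -> Zk k)
  (v : vtx D) (r : reg D) : Zk k :=
  if incident v r then a v r else 0.

Definition null_pattern (k : kcol) (a : vtx D -> reg D -> Zk k)
  (l : reg D -> Zk k) : Prop :=
  forall v, \sum_(r : reg D) game_matrix a v r * l r = 0.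

End Diag.

From mathcomp Require Import all_boot all_order all_algebra all_fingroup.
From mathcomp Require Import zify ring.
Set Implicit Arguments. Unset Strict Implicit. Unset Printing Implicit Defensive.
Import GRing.Theory.

(* Euler's formula, via the
   F_2 chain complex, shows that splitting a crossing at two corners of one
   region disconnects the map.  Hence adjacent corners of a crossing lie in
   distinct regions, and a reducible crossing separates the diagram into two
   sides.  Write E(h) for the sum of the pattern on the two regions along the
   edge-end h.  The null condition at a crossing propagates E(h) = 0 along a
   walk that goes straight through irreducible crossings and turns at
   reducible ones.  This walk never changes sides, and since the knot has one component
   it links all four darts of every irreducible crossing.  So if the pattern
   vanishes on both sides of one edge, it vanishes around its end crossing,
   hence on both sides of the next edges, and by connectedness everywhere. *)

Section CombinatorialMap.
Variable T : finType.

Definition map_rel (s a : T -> T) : rel T :=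
  [rel u w | (w == s u) || (u == s w) || (w == a u)].

Lemma map_rel_sym (s a : T -> T) : involutive a -> connect_sym (map_rel s a).
Proof.
move=> aK; apply: sym_connect_sym => x y; rewrite /map_rel /= [(y == s x) || _]orbC.
by congr (_ || _); apply/eqP/eqP => [->|->]; rewrite aK.
Qed.

Lemma fconnect_porbit (q : {perm T}) x y : fconnect q x y = (y \in porbit q x).
Proof.
apply/idP/porbitP => [xy|[i ->]]; last by rewrite permX fconnect_iter.
by exists (findex q x y); rewrite permX iter_findex.
Qed.

Lemma porbits_partition (q : {perm T}) : partition (porbits q) [set: T].
Proof.
have qT : [acts <[q]>%g, on [set: T] | 'P] by apply/actsP => x _ y; rewrite !inE.
suff <- : orbit 'P <[q]>%g @: [set: T] = porbits q by exact: orbit_partition.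
rewrite /porbits porbit.unlock; apply/setP => A.
by apply/imsetP/imsetP => -[x _ ->]; exists x.
Qed.

Lemma card_labels_porbits (L : finType) (q : {perm T}) (lab : T -> L) :
  (forall x y, lab x = lab y <-> fconnect q x y) -> (forall l, exists x, lab x = l) ->
  #|L| = #|porbits q|.
Proof.
move=> labP lab_surj.
have -> : porbits q = [set [set x | lab x == l] | l : L].
  apply/setP => A; apply/imsetP/imsetP => [[y _ ->]|[l _ ->]].
    exists (lab y) => //; apply/setP => x; rewrite inE -fconnect_porbit.
    by apply/idP/eqP => H; [symmetry; apply/labP | apply/labP; symmetry].
  have [y <-] := lab_surj l; exists y => //; apply/setP => x.
  by rewrite inE -fconnect_porbit; apply/eqP/idP => H; [apply/labP | apply/esym/labP].
rewrite card_imset ?cardsT // => l l' ll'.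
have [x xl] := lab_surj l.
have : x \in [set x | lab x == l] by rewrite inE xl.
by rewrite ll' inE xl => /eqP.
Qed.

Lemma even_card_involution (f : T -> T) (S : {set T}) : involutive f ->
  {in S, forall x, f x \in S} -> {in S, forall x, f x != x} -> ~~ odd #|S|.
Proof.
move=> fK; have [n] := ubnP #|S|; elim: n S => // n IH S ltSn fS fneq.
have [->|[x xS]] := set_0Vmem S; first by rewrite cards0.
have fxS : f x \in S :\ x by rewrite !inE fneq // fS.
have cardS : #|S| = (#|S :\ x :\ f x| + 2)%N.
  by rewrite (cardsD1 x S) xS (cardsD1 (f x) (S :\ x)) fxS; lia.
rewrite cardS oddD /= addbF; apply: IH => [|z|z].
- by move: ltSn; rewrite cardS; lia.
- rewrite !inE => /and3P[zfx zx zS]; rewrite fS // andbT.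
  rewrite (inj_eq (can_inj fK)) zx /=.
  by apply: contra zfx => /eqP <-; rewrite fK.
- by rewrite !inE => /and3P[_ _]; apply: fneq.
Qed.

Local Open Scope ring_scope.

Lemma pchar_F2 : (2 \in [pchar 'F_2])%N. Proof. exact: pchar_Fp. Qed.

Lemma F2_addr_eq0 (u v : 'F_2) : (u + v == 0) = (u == v).
Proof. by rewrite -[v in LHS](oppr_pchar2 pchar_F2) subr_eq0. Qed.

Section IncidenceMatrix.
Variables (m n : nat) (l1 : T -> 'I_m) (l2 : T -> 'I_n).

Definition incidence_mx : 'M['F_2]_(m, n) :=
  \matrix_(i, j) \sum_(x | (l1 x == i) && (l2 x == j)) 1.

Lemma sum_incidence_mxl (G : 'I_m -> 'F_2) j :
  \sum_i G i * incidence_mx i j = \sum_(x | l2 x == j) G (l1 x).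
Proof.
under eq_bigr => i _ do rewrite mxE mulr_sumr mulr1 big_mkcond.
rewrite exchange_big [RHS]big_mkcond; apply: eq_bigr => x _ /=.
rewrite (bigD1 (l1 x)) //= eqxx big1 ?addr0 => [|i /negbTE li]; first by case: ifP.
by rewrite eq_sym li.
Qed.
End IncidenceMatrix.

Lemma trmx_incidence m n (l1 : T -> 'I_m) (l2 : T -> 'I_n) :
  (incidence_mx l1 l2)^T = incidence_mx l2 l1.
Proof. by apply/matrixP => j i; rewrite !mxE; apply: eq_bigl => x; rewrite andbC. Qed.

Lemma sum_incidence_mxr m n (l1 : T -> 'I_m) (l2 : T -> 'I_n) (G : 'I_n -> 'F_2) i :
  \sum_j incidence_mx l1 l2 i j * G j = \sum_(x | l1 x == i) G (l2 x).
Proof.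
rewrite -sum_incidence_mxl -trmx_incidence.
by apply: eq_bigr => j _; rewrite mxE mulrC.
Qed.

Lemma porbit_in_porbits (q : {perm T}) x : porbit q x \in porbits q.
Proof. exact: imset_f. Qed.

Definition porbit_idx (q : {perm T}) x : 'I_#|porbits q| :=
  enum_rank_in (porbit_in_porbits q x) (porbit q x).

Lemma porbit_idxK q x : enum_val (porbit_idx q x) = porbit q x.
Proof. by rewrite /porbit_idx enum_rankK_in // porbit_in_porbits. Qed.

Lemma eq_porbit_idx q x y : (porbit_idx q x == porbit_idx q y) = (y \in porbit q x).
Proof.
apply/eqP/idP => [xy|]; first by rewrite -eq_porbit_mem -!porbit_idxK xy.
by rewrite -eq_porbit_mem => /eqP yx; apply: enum_val_inj; rewrite !porbit_idxK yx.
Qed.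

Lemma porbit_idx_surj q (i : 'I_#|porbits q|) : exists x, porbit_idx q x = i.
Proof.
have /imsetP[x _ ix] := enum_valP i.
by exists x; apply: enum_val_inj; rewrite porbit_idxK ix.
Qed.

Lemma porbit_idx_perm q x : porbit_idx q (q x) = porbit_idx q x.
Proof. by apply: enum_val_inj; rewrite !porbit_idxK -(porbit_perm q 1 x) expg1. Qed.

Lemma face_perm (s a : {perm T}) x : (s * a)%g x = a (s x). Proof. exact: permM. Qed.

Section EulerInequality.
Variables s a : {perm T}.
Hypothesis aK : involutive a.
Hypothesis a_neq : forall x, a x != x.

Lemma porbit_involution x y : (y \in porbit a x) = (y == x) || (y == a x).
Proof.
apply/porbitP/orP => [[i ->]|[/eqP->|/eqP->]]; last 2 first.
- by exists 0%N; rewrite expg0 perm1.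
- by exists 1%N; rewrite expg1.
elim: i => [|i [/eqP IH|/eqP IH]]; first by left; rewrite expg0 perm1.
  by right; rewrite expgSr permM IH.
by left; rewrite expgSr permM IH aK.
Qed.

Lemma card_porbits_involution : #|T| = (2 * #|porbits a|)%N.
Proof.
rewrite -cardsT (card_partition (porbits_partition a)) mulnC -sum_nat_const.
apply: eq_bigr => _ /imsetP[x _ ->].
have -> : porbit a x = [set x; a x] by apply/setP => y; rewrite porbit_involution !inE.
by rewrite cards2 eq_sym a_neq.
Qed.

Lemma sum_porbit_involution (G : T -> 'F_2) x :
  \sum_(y | porbit_idx a y == porbit_idx a x) G y = G x + G (a x).
Proof.
rewrite (bigD1 x) ?eqxx //= (big_pred1 (a x)) // => y /=.
rewrite eq_sym eq_porbit_idx porbit_involution.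
by have [->|] := eqVneq y x; rewrite ?andbT // eq_sym (negbTE (a_neq x)).
Qed.

Hypothesis connected : forall x y, connect (map_rel s a) x y.

Lemma map_rel_const (U : Type) (f : T -> U) :
  (forall x, f (s x) = f x) -> (forall x, f (a x) = f x) -> forall x y, f x = f y.
Proof.
move=> fs fa x y; have /connectP[p xp ->] := connected x y.
elim: p x xp => [|z p IH] x //= /andP[xz zp]; rewrite -(IH z zp).
by case/orP: xz => [/orP[]|] /eqP->; rewrite ?fs ?fa.
Qed.

Local Notation vidx := (porbit_idx s).
Local Notation eidx := (porbit_idx a).
Local Notation fidx := (porbit_idx (s * a)%g).

(* The F_2 boundary maps of the cellular chain complex. *)
Let vertex_edge := incidence_mx eidx vidx.
Let edge_face := incidence_mx fidx eidx.

Lemma boundary_mulmx0 : edge_face *m vertex_edge = 0.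
Proof.
apply/matrixP => f v; rewrite !mxE sum_incidence_mxr.
pose b y : 'F_2 := if vidx y == v then 1 else 0.
under eq_bigr => x _ do rewrite mxE big_mkcondr -/(b _) sum_porbit_involution.
rewrite big_split /= [X in _ + X](reindex_inj (@perm_inj _ (s * a)%g)) /=.
under [X in _ + X]eq_bigr => x _ do rewrite face_perm aK /b porbit_idx_perm.
by rewrite [X in _ + X](eq_bigl (fun x => fidx x == f)) ?addrr_pchar2 ?pchar_F2 //
  => x; rewrite porbit_idx_perm.
Qed.

Lemma invariant_row_const m (lab : T -> 'I_m) (u : 'rV['F_2]_m) :
  (forall j, exists x, lab x = j) ->
  (forall x, u 0 (lab (s x)) = u 0 (lab x)) -> (forall x, u 0 (lab (a x)) = u 0 (lab x)) ->
  (u <= (const_mx 1 : 'rV['F_2]_m))%MS.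
Proof.
move=> lab_surj us ua; have uc := @map_rel_const _ (fun x => u 0 (lab x)) us ua; apply/sub_rVP.
have [x0 _|T0] := pickP (@predT T).
  exists (u 0 (lab x0)); apply/rowP => j; have [y <-] := lab_surj j.
  by rewrite !mxE mulr1 (uc y x0).
by exists 0; apply/rowP => j; have [y _] := lab_surj j; have := T0 y.
Qed.

Lemma kermx_edge_face : (kermx edge_face <= (const_mx 1 : 'rV['F_2]_#|porbits (s * a)|))%MS.
Proof.
apply/row_subP => i.
have: row i (kermx edge_face) *m edge_face = 0 by rewrite -row_mul mulmx_ker row0.
move: (row i _) => u uP.
have ua x : u 0 (fidx (a x)) = u 0 (fidx x).
  have := congr1 (fun M : 'rV_ _ => M 0 (eidx x)) uP.
  rewrite !mxE sum_incidence_mxl sum_porbit_involution => /eqP.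
  by rewrite F2_addr_eq0 eq_sym => /eqP.
apply: invariant_row_const (@porbit_idx_surj _) _ (ua) => x.
by rewrite -[s x]aK -(face_perm s a) ua porbit_idx_perm.
Qed.

Lemma kermx_vertex_edge : (kermx vertex_edge^T <= (const_mx 1 : 'rV['F_2]_#|porbits s|))%MS.
Proof.
apply/row_subP => i.
have: row i (kermx vertex_edge^T) *m vertex_edge^T = 0 by rewrite -row_mul mulmx_ker row0.
move: (row i _) => u uP.
have ua x : u 0 (vidx (a x)) = u 0 (vidx x).
  have := congr1 (fun M : 'rV_ _ => M 0 (eidx x)) uP.
  rewrite !mxE trmx_incidence sum_incidence_mxl sum_porbit_involution => /eqP.
  by rewrite F2_addr_eq0 eq_sym => /eqP.
by apply: invariant_row_const (@porbit_idx_surj _) _ (ua) => x; rewrite porbit_idx_perm.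
Qed.

(* Rank counting: by connectedness, H_0 and H_2 have dimension at most 1. *)
Lemma porbits_euler_le : (#|porbits s| + #|porbits (s * a)| <= #|porbits a| + 2)%N.
Proof.
have h1 : (\rank edge_face <= #|porbits a| - \rank vertex_edge)%N.
  by rewrite -mxrank_ker; apply: mxrankS; rewrite sub_kermx boundary_mulmx0.
have h2 : (#|porbits (s * a)| - \rank edge_face <= 1)%N.
  by rewrite -mxrank_ker; apply: leq_trans (mxrankS kermx_edge_face) (rank_leq_row _).
have h3 : (#|porbits s| - \rank vertex_edge <= 1)%N.
  rewrite -mxrank_tr -mxrank_ker.
  exact: leq_trans (mxrankS kermx_vertex_edge) (rank_leq_row _).
have h4 : (\rank vertex_edge <= #|porbits a|)%N by exact: rank_leq_row.
lia.
Qed.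
End EulerInequality.
End CombinatorialMap.

Section KnotDiagram.
Variable D : diagram.
Hypothesis KD : knot_diagram D.

Local Notation s := (sigma D).
Local Notation a := (alpha D).
Local Notation vof := (@vof D).
Local Notation rof := (@rof D).
Local Notation tau := (@tau D).

Lemma alphaK : involutive a. Proof. by case: KD => H _ h; case: (H h). Qed.
Lemma alpha_neq h : a h != h. Proof. by case: KD => H _; case: (H h). Qed.
Lemma sigma4 h : s (s (s (s h))) = h. Proof. by case: KD => _ [H _]; case: (H h). Qed.
Lemma sigma_neq h : s h != h. Proof. by case: KD => _ [H _]; case: (H h) => _ []. Qed.
Lemma sigma2_neq h : s (s h) != h. Proof. by case: KD => _ [H _]; case: (H h) => _ []. Qed.
Lemma vofP h h' : vof h = vof h' <-> fconnect s h h'.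
Proof. by case: KD => _ [_ []]. Qed.
Lemma vof_surj v : exists h, vof h = v. Proof. by case: KD => _ [_ [_ []]]. Qed.
Lemma rofP h h' : rof h = rof h' <-> fconnect (phi (D:=D)) h h'.
Proof. by case: KD => _ [_ [_ [_ []]]]. Qed.
Lemma rof_surj r : exists h, rof h = r. Proof. by case: KD => _ [_ [_ [_ [_ []]]]]. Qed.
Lemma tau_covers : exists h0, forall h, fconnect tau h0 h \/ fconnect tau h0 (a h).
Proof. by case: KD => _ [_ [_ [_ [_ [_ []]]]]]. Qed.
Lemma knot_euler : (#|vtx D| + #|reg D| = #|dart D| %/ 2 + 2)%N.
Proof. by case: KD => _ [_ [_ [_ [_ [_ []]]]]]. Qed.

Lemma sigma3_neq h : s (s (s h)) != h.
Proof. by apply/eqP => E; move: (sigma_neq h); rewrite -{1}E sigma4 eqxx. Qed.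
Lemma sigma_neq2 h : s h != s (s h).
Proof. by rewrite (inj_eq perm_inj) eq_sym sigma_neq. Qed.

Lemma vof_sigma h : vof (s h) = vof h.
Proof. by symmetry; apply/vofP; apply: fconnect1. Qed.
Lemma rof_iter_phi n h : rof (iter n (phi (D:=D)) h) = rof h.
Proof. by symmetry; apply/rofP; apply: fconnect_iter. Qed.
Lemma rof_alpha h : rof (a h) = rof (s (s (s h))).
Proof. by rewrite -(rof_iter_phi 1 (s (s (s h)))) /= /phi sigma4. Qed.

Lemma darts_at g w : vof w = vof g -> [\/ w = g, w = s g, w = s (s g) | w = s (s (s g))].
Proof.
move=> /esym/vofP/iter_findex <-; rewrite (divn_eq (findex s g w) 4) iterD.
have -> n z : iter (n * 4) s z = z by elim: n => // n IH; rewrite mulSn iterD IH /= sigma4.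
have : (findex s g w %% 4 < 4)%N by rewrite ltn_mod.
by case: (findex s g w %% 4)%N => [|[|[|[|//]]]] _ /=; constructor.
Qed.

Lemma knot_map_connected x y : connect (map_rel s a) x y.
Proof.
have sym := map_rel_sym s alphaK.
have [h0 cover] := tau_covers.
have tau_conn : subrel (fconnect tau) (connect (map_rel s a)).
  apply: connect_sub => h _ /eqP <-.
  apply: (@connect_trans _ _ (a h)); first by apply: connect1; rewrite /map_rel /= eqxx !orbT.
  apply: (@connect_trans _ _ (s (a h))); by apply: connect1; rewrite /map_rel /= eqxx.
suff from0 h : connect (map_rel s a) h0 h.
  by apply: (connect_trans _ (from0 y)); rewrite sym from0.
case: (cover h) => /tau_conn // h0ah; apply: connect_trans h0ah (connect1 _).
by rewrite /map_rel /= alphaK eqxx !orbT.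
Qed.

Lemma knot_porbits_euler : (#|porbits s| + #|porbits (s * a)| = #|porbits a| + 2)%N.
Proof.
have -> : #|porbits s| = #|vtx D| by symmetry; apply: card_labels_porbits vofP vof_surj.
have -> : #|porbits (s * a)| = #|reg D|.
  symmetry; apply: card_labels_porbits rof_surj => x y.
  by rewrite (eq_fconnect (f' := phi (D:=D)) (face_perm s a)); exact: rofP.
by rewrite knot_euler (card_porbits_involution alphaK alpha_neq) mulKn.
Qed.

Lemma connect_map_rel_step (q : {perm dart D}) c z w :
  map_rel q a z w -> connect (map_rel q a) c z = connect (map_rel q a) c w.
Proof.
move=> zw; apply/idP/idP => cz; first exact: connect_trans cz (connect1 zw).
by apply: connect_trans cz _; rewrite map_rel_sym ?connect1 //; apply: alphaK.
Qed.

Lemma connect_map_rel_perm (q : {perm dart D}) c z :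
  connect (map_rel q a) c (q z) = connect (map_rel q a) c z.
Proof. by apply/esym/connect_map_rel_step; rewrite /map_rel /= eqxx. Qed.

Lemma connect_map_rel_alpha (q : {perm dart D}) c z :
  connect (map_rel q a) c (a z) = connect (map_rel q a) c z.
Proof. by apply/esym/connect_map_rel_step; rewrite /map_rel /= eqxx !orbT. Qed.

(* For distinct darts x, y of one crossing, this cuts the crossing into two vertices. *)
Definition split_sigma (x y : dart D) : {perm dart D} := (tperm x y * s)%g.

Lemma split_sigmaE x y z : z != x -> z != y -> split_sigma x y z = s z.
Proof. by move=> zx zy; rewrite permM tpermD // eq_sym. Qed.
Lemma split_sigmax x y : split_sigma x y x = s y. Proof. by rewrite permM tpermL. Qed.

Lemma split_sigma_off x y z : vof x = vof y -> vof z != vof x -> split_sigma x y z = s z.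
Proof.
by move=> xy zx; apply: split_sigmaE; apply: contraNneq zx => ->; rewrite xy eqxx.
Qed.

(* The split map gains a vertex and a face while keeping its edges, so by the
   Euler inequality it cannot stay connected. *)
Lemma split_disconnected x y : vof x = vof y -> x != y -> rof x = rof y ->
  ~ (forall u w, connect (map_rel (split_sigma x y) a) u w).
Proof.
move=> xyv xy xyr conn.
have := porbits_euler_le alphaK alpha_neq conn; rewrite /split_sigma -mulgA.
have xs : x \in porbit s y by rewrite -fconnect_porbit; apply/vofP.
have xf : x \in porbit (s * a) y.
  by rewrite -fconnect_porbit (eq_fconnect (face_perm s a)); apply/rofP.
have := porbits_mul_tperm s x y; have := porbits_mul_tperm (s * a)%g x y.
by rewrite xs xf xy /= double0 !addn0 => -> ->; rewrite addnACA knot_porbits_euler -addnA leq_add2l.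
Qed.

Lemma split_reaches_vertex x y z : vof x = vof y ->
  exists2 w, vof w = vof x & connect (map_rel (split_sigma x y) a) z w.
Proof.
move=> xyv; have /connectP[p zp xE] := knot_map_connected z x.
elim: p z zp xE => [|z1 p IH] z /= zp xE; first by exists z; rewrite ?xE.
case/andP: zp => zz1 z1p; have [zx|zx] := eqVneq (vof z) (vof x); first by exists z.
have [w wx z1w] := IH z1 z1p xE; exists w => //; apply: connect_trans z1w.
apply: connect1; rewrite /map_rel /=.
case/orP: zz1 => [/orP[]|->]; last by rewrite !orbT.
  by move/eqP->; rewrite split_sigma_off // eqxx.
move/eqP=> zE; have z1x : vof z1 != vof x by rewrite -vof_sigma -zE.
by rewrite (split_sigma_off xyv z1x) -zE eqxx orbT.
Qed.

Lemma split_connected_from_vertex x y c : vof x = vof y ->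
  (forall w, vof w = vof x -> connect (map_rel (split_sigma x y) a) c w) ->
  forall u w, connect (map_rel (split_sigma x y) a) u w.
Proof.
move=> xyv cP u w; have sym := map_rel_sym (split_sigma x y) alphaK.
have [u' u'x uu'] := split_reaches_vertex u xyv.
have [w' w'x ww'] := split_reaches_vertex w xyv.
apply: connect_trans uu' _; rewrite sym; apply: connect_trans ww' _.
by rewrite sym; apply: (@connect_trans _ _ c); [rewrite sym|]; apply: cP.
Qed.

(* Splitting at h and s h turns s h into a dart of valence one. Its component
   then has odd size: its other darts lie off the crossing and are paired by
   s^2. But a pairs all the darts of a component. *)
Lemma rof_sigma_neq h : rof h != rof (s h).
Proof.
apply/negP => /eqP hr; set q := split_sigma h (s h).
have hv : vof h = vof (s h) by rewrite vof_sigma.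
pose C := [set z | connect (map_rel q a) (s h) z].
have C_q z : (q z \in C) = (z \in C) by rewrite !inE connect_map_rel_perm.
have C_s z : vof z != vof h -> (s z \in C) = (z \in C).
  by move=> zv; rewrite -(split_sigma_off hv zv) C_q.
have C2 : (s (s h) \in C) = (h \in C) by rewrite -(C_q h) /q split_sigmax.
have C3 : (s (s (s h)) \in C) = (h \in C).
  by rewrite -(C_q (s (s (s h)))) /q split_sigmaE ?sigma4 ?sigma3_neq ?sigma2_neq.
have hC : h \notin C.
  apply/negP => Ch; apply: (split_disconnected hv _ hr); first by rewrite eq_sym sigma_neq.
  apply: (split_connected_from_vertex (c := s h) hv) => w /darts_at[]-> ;
    by rewrite -[connect _ _ _]inE ?C2 ?C3 // inE connect0.
have C_off z : z \in C :\ s h -> vof z != vof h.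
  rewrite in_setD1 => /andP[zsh Cz]; apply/eqP => /darts_at[] zE; subst z.
  - by rewrite Cz in hC.
  - by rewrite eqxx in zsh.
  - by move: Cz; rewrite C2 (negbTE hC).
  - by move: Cz; rewrite C3 (negbTE hC).
have even_C : ~~ odd #|C|.
  apply: even_card_involution alphaK _ _ => [z Cz|z _]; last exact: alpha_neq.
  by rewrite !inE connect_map_rel_alpha in Cz *.
have even_C' : ~~ odd #|C :\ s h|.
  apply: (even_card_involution (f := fun z => s (s z))) => [z|z Cz|z _].
  - exact: sigma4.
  - have zv := C_off z Cz; have szv : vof (s z) != vof h by rewrite vof_sigma.
    have : vof (s (s z)) != vof (s h) by rewrite !vof_sigma.
    move: Cz; rewrite !in_setD1 (C_s _ szv) (C_s _ zv) => /andP[_ ->].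
    by rewrite andbT; apply: contraNneq => ->.
  - exact: sigma2_neq.
by move: even_C; rewrite (cardsD1 (s h)) inE connect0 oddD (negbTE even_C').
Qed.

Definition irreducibleb (v : vtx D) : bool :=
  [forall h, forall h', (vof h == v) ==> (vof h' == v) ==> (rof h == rof h') ==> (h == h')].

Lemma irreducibleP v : reflect (irreducible v) (irreducibleb v).
Proof.
apply: (iffP forallP) => [irr h h' hv h'v hh'|irr h].
  by have /forallP/(_ h') := irr h; rewrite hv h'v hh' !eqxx => /eqP.
apply/forallP => h'; apply/implyP => /eqP hv; apply/implyP => /eqP h'v.
by apply/implyP => /eqP hh'; apply/eqP; apply: irr.
Qed.

Lemma reducible_corner v :
  ~~ irreducibleb v -> exists2 g, vof g = v & rof g = rof (s (s g)).
Proof.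
case/forallPn => h /forallPn[h']; rewrite !negb_imply => /and4P[/eqP hv /eqP h'v /eqP hh' hh'n].
have : vof h' = vof h by rewrite hv h'v.
case/darts_at => h'E; rewrite {}h'E in hh' hh'n.
- by rewrite eqxx in hh'n.
- by move: (rof_sigma_neq h); rewrite hh' eqxx.
- by exists h.
- by move: (rof_sigma_neq (s (s (s h)))); rewrite sigma4 hh' eqxx.
Qed.

Lemma corner_reducible g : rof g = rof (s (s g)) -> ~~ irreducibleb (vof g).
Proof.
move=> gr; apply/irreducibleP => irr.
have gE : g = s (s g) by apply: irr gr; rewrite ?vof_sigma.
by move: (sigma2_neq g); rewrite -gE eqxx.
Qed.

(* At a crossing g with rof g = rof (s (s g)), splitting at g and s^2 g
   separates the diagram into two sides. *)
Definition side (g : dart D) : {set dart D} :=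
  [set z | connect (map_rel (split_sigma g (s (s g))) a) (s g) z].

Lemma side_alpha g z : (a z \in side g) = (z \in side g).
Proof. by rewrite !inE connect_map_rel_alpha. Qed.

Lemma side_sigma g z : vof z != vof g -> (s z \in side g) = (z \in side g).
Proof.
move=> zg; have gv : vof g = vof (s (s g)) by rewrite !vof_sigma.
by rewrite !inE -[s z](split_sigma_off gv zg) connect_map_rel_perm.
Qed.

Lemma side_vertex g e f : vof e != vof g -> vof f = vof e ->
  (f \in side g) = (e \in side g).
Proof.
move=> eg; have e1 : vof (s e) != vof g by rewrite vof_sigma.
have e2 : vof (s (s e)) != vof g by rewrite !vof_sigma.
by case/darts_at=> ->; rewrite ?(side_sigma e2) ?(side_sigma e1) ?(side_sigma eg).
Qed.

Lemma side_tau g w : vof (a w) != vof g -> (tau w \in side g) = (w \in side g).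
Proof. by move=> wg; rewrite /tau !side_sigma ?vof_sigma // side_alpha. Qed.

(* At a reducible crossing g the partners are g, s^3 g and s g, s^2 g: the two
   darts on each side. *)
Definition partner (e : dart D) : dart D :=
  if rof e == rof (s (s e)) then s (s (s e)) else s e.

Section ReducibleCrossing.
Variable g : dart D.
Hypothesis g_red : rof g = rof (s (s g)).

Let q := split_sigma g (s (s g)).
Let gv : vof g = vof (s (s g)). Proof. by rewrite !vof_sigma. Qed.

Lemma side_split z : (q z \in side g) = (z \in side g).
Proof. by rewrite !inE connect_map_rel_perm. Qed.

Lemma sigma_in_side : s g \in side g. Proof. by rewrite inE connect0. Qed.

Lemma sigma2_in_side : s (s g) \in side g.
Proof.
have qsg : q (s g) = s (s g) by rewrite /q split_sigmaE ?sigma_neq ?sigma_neq2.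
by rewrite -qsg side_split sigma_in_side.
Qed.

Lemma sigma3_side : (s (s (s g)) \in side g) = (g \in side g).
Proof. by rewrite -(side_split g) /q split_sigmax. Qed.

Lemma notin_side : g \notin side g.
Proof.
apply/negP => gC; apply: (split_disconnected gv _ g_red); first by rewrite eq_sym sigma2_neq.
apply: (split_connected_from_vertex (c := s g) gv) => w /darts_at[]->; rewrite -[connect _ _ _]inE.
- exact: gC.
- exact: sigma_in_side.
- exact: sigma2_in_side.
- by rewrite sigma3_side.
Qed.

Lemma sigma3_notin_side : s (s (s g)) \notin side g.
Proof. by rewrite sigma3_side notin_side. Qed.

(* The face of s g avoids the split darts g and s^2 g, so it stays in side g,
   which does not contain s^3 g. *)
Lemma rof_sigma_sigma3_neq : rof (s g) != rof (s (s (s g))).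
Proof.
have side_phi n : iter n (phi (D:=D)) (s g) \in side g.
  elim: n => [|n IH] /=; first exact: sigma_in_side.
  set z := iter n _ _ in IH *; have zr : rof z = rof (s g) by rewrite rof_iter_phi.
  have zg : z != g by apply: contraNneq _ (rof_sigma_neq g) => zE; rewrite -{1}zE zr.
  have zg2 : z != s (s g).
    by apply: contraNneq _ (rof_sigma_neq g) => zE; rewrite g_red -zE zr.
  by rewrite /phi side_alpha -(split_sigmaE zg zg2) side_split.
apply/negP => /eqP/rofP/iter_findex E.
by move: (side_phi (findex (phi (D:=D)) (s g) (s (s (s g))))); rewrite E (negbTE sigma3_notin_side).
Qed.

Lemma partnerE : [/\ partner g = s (s (s g)), partner (s g) = s (s g),
  partner (s (s g)) = s g & partner (s (s (s g))) = g].
Proof.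
have n13 := negbTE rof_sigma_sigma3_neq; rewrite /partner !sigma4; split.
- by rewrite g_red eqxx.
- by rewrite n13.
- by rewrite -g_red eqxx.
- by rewrite eq_sym n13.
Qed.

Let sideE := (negbTE notin_side, sigma_in_side, sigma2_in_side, negbTE sigma3_notin_side).

Lemma side_partner e : vof e = vof g -> (partner e \in side g) = (e \in side g).
Proof. by have [p0 p1 p2 p3] := partnerE; case/darts_at=> ->; rewrite ?p0 ?p1 ?p2 ?p3 !sideE. Qed.

Lemma same_side_partner e w : vof e = vof g -> vof w = vof g ->
  (w \in side g) = (e \in side g) -> w = e \/ w = partner e.
Proof.
have [p0 p1 p2 p3] := partnerE.
do 2 case/darts_at=> ->; rewrite !sideE // => _; rewrite ?p0 ?p1 ?p2 ?p3; by [left|right].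
Qed.

Lemma side_tau_flip w : vof (a w) = vof g -> (tau w \in side g) = ~~ (w \in side g).
Proof.
by rewrite -(side_alpha g w) /tau; case/darts_at=> ->; rewrite ?sigma4 !sideE.
Qed.
End ReducibleCrossing.

Definition step (h : dart D) : dart D :=
  let e := a h in if irreducibleb (vof e) then s (s e) else partner e.

Definition step_rel : rel (dart D) := [rel u w | (w == step u) || (w == a u)].

Definition same_sides (x y : dart D) : Prop :=
  forall g, rof g = rof (s (s g)) -> (x \in side g) = (y \in side g).

Lemma step_rel_same_sides u w : step_rel u w -> same_sides u w.
Proof.
case/orP=> /eqP-> g g_red; last by rewrite side_alpha.
rewrite /step -(side_alpha g u); case: ifP => [irr|red].
  have ug : vof (a u) != vof g by apply: contraTneq irr => ->; apply: corner_reducible.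
  by rewrite (side_vertex ug) // !vof_sigma.
have [ug|ug] := eqVneq (vof (a u)) (vof g); first by rewrite (side_partner g_red ug).
by rewrite (side_vertex ug) // /partner; case: ifP; rewrite !vof_sigma.
Qed.

Lemma connect_step_same_sides x y : connect step_rel x y -> same_sides x y.
Proof.
case/connectP=> p xp ->{y}; elim: p x xp => [|z p IH] x //= /andP[xz zp] g g_red.
by rewrite (step_rel_same_sides xz g_red) (IH z zp g g_red).
Qed.

Lemma connect_step_tau_irr x m :
  (forall k, k < m -> irreducibleb (vof (a (iter k tau x)))) -> connect step_rel x (iter m tau x).
Proof.
elim: m => [|m IH] irr; first exact: connect0.
apply: connect_trans (IH _) (connect1 _) => [k km|]; first by apply: irr; apply: ltnW.
by rewrite /step_rel /step /= irr // eqxx.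
Qed.

(* Leaving a reducible crossing g, the straight-ahead walk can only come back to
   the side it started on through g itself. *)
Lemma tau_return g z m : rof g = rof (s (s g)) -> vof (a z) = vof g -> 0 < m ->
  (iter m tau z \in side g) = (z \in side g) -> exists2 j, 0 < j <= m & step_rel z (iter j tau z).
Proof.
move=> g_red zg m_gt0 mz.
pose P j := (0 < j) && ((iter j tau z \in side g) == (z \in side g)).
have Pm : P m by rewrite /P m_gt0 mz eqxx.
case: (ex_minnP (ex_intro P m Pm)) => j /andP[j_gt0 /eqP jz] j_min.
have jm : j <= m := j_min m Pm.
have j_gt1 : 1 < j.
  rewrite ltn_neqAle j_gt0 andbT; apply/negP => /eqP j1; move: jz.
  by rewrite -j1 /= (side_tau_flip g_red zg); case: (z \in side g).
set w := iter j.-1 tau z.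
have jw : iter j tau z = tau w by rewrite /w -iterS prednK.
have wz : (w \in side g) != (z \in side g).
  apply/negP => /eqP wz; have := j_min j.-1; rewrite /P -/w wz eqxx andbT ltn_predRL j_gt1.
  by move=> /(_ isT); rewrite leqNgt ltn_predL j_gt0.
have wg : vof (a w) = vof g.
  by apply/eqP; apply: contraNT wz => /side_tau <-; rewrite -jw jz.
have jg : vof (iter j tau z) = vof g by rewrite jw /tau !vof_sigma.
have := same_side_partner g_red zg jg; rewrite side_alpha jz => /(_ erefl) jE.
exists j; first by rewrite j_gt0 jm.
have red : ~~ irreducibleb (vof (a z)) by rewrite zg corner_reducible.
by rewrite /step_rel /step /= (negbTE red); case: jE => ->; rewrite eqxx ?orbT.
Qed.

(* Follow tau up to the first reducible crossing, come back to the starting side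
   there by tau_return, and recurse on the rest of the path. *)
Lemma connect_step_tau n x :
  same_sides x (iter n tau x) -> connect step_rel x (iter n tau x).
Proof.
elim/ltn_ind: n x => n IH x xn.
have [/existsP[k0 red0]|/existsPn irr] :=
  boolP [exists k : 'I_n, ~~ irreducibleb (vof (a (iter k tau x)))]; last first.
  by apply: connect_step_tau_irr => k kn; move/negPn: (irr (Ordinal kn)).
pose P i := (i < n) && ~~ irreducibleb (vof (a (iter i tau x))).
have Pk0 : P k0 by rewrite /P ltn_ord red0.
case: (ex_minnP (ex_intro P k0 Pk0)) => i /andP[i_lt_n red] i_min.
set z := iter i tau x.
have xz : connect step_rel x z.
  apply: connect_step_tau_irr => k ki; apply/negPn/negP => redk.
  by have := i_min k; rewrite /P redk (ltn_trans ki i_lt_n) leqNgt ki => /(_ isT).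
have [g zg g_red] := reducible_corner red.
have zn : iter (n - i) tau z = iter n tau x by rewrite /z -iterD subnK // ltnW.
have [j /andP[j_gt0 j_le] zj] : exists2 j, 0 < j <= n - i & step_rel z (iter j tau z).
  apply: tau_return (g_red) (esym zg) _ _; first by rewrite subn_gt0.
  by rewrite zn -(xn g g_red) (connect_step_same_sides xz g_red).
have xj : connect step_rel x (iter (j + i) tau x).
  by rewrite iterD; apply: connect_trans xz (connect1 zj).
have jin : j + i <= n by rewrite addnC -leq_subRL // ltnW.
have nE : iter n tau x = iter (n - (j + i)) tau (iter (j + i) tau x).
  by rewrite -iterD subnK.
rewrite nE in xn *; apply: connect_trans (xj) (IH _ _ _ _).
  by rewrite ltn_subrL addn_gt0 j_gt0 (leq_ltn_trans (leq0n i) i_lt_n).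
by move=> g' g'_red; rewrite -(connect_step_same_sides xj g'_red) xn.
Qed.

Lemma tau_inj : injective tau.
Proof. by move=> x y /perm_inj/perm_inj/perm_inj. Qed.

Lemma connect_step_fconnect x y :
  fconnect tau x y -> same_sides x y -> connect step_rel x y.
Proof. by move=> xy; rewrite -(iter_findex xy); apply: connect_step_tau. Qed.

(* Up to a, every dart lies on the single straight-ahead circuit, and the darts
   of an irreducible crossing are on the same side of every reducible one. *)
Lemma irr_vertex_linked e f :
  irreducibleb (vof e) -> vof f = vof e -> connect step_rel e f.
Proof.
move=> irr fe; have [h0 cover] := tau_covers.
have rep z : exists2 z', fconnect tau h0 z' & [/\ connect step_rel z z',
    connect step_rel z' z & forall g, (z' \in side g) = (z \in side g)].
  case: (cover z) => h0z; [exists z | exists (a z)] => //;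
    split=> [||g]; rewrite ?side_alpha ?connect0 //.
  - by apply: connect1; rewrite /step_rel /= eqxx orbT.
  - by apply: connect1; rewrite /step_rel /= alphaK eqxx orbT.
have [[e' h0e' [ee' _ e'e]] [f' h0f' [_ f'f f'f_side]]] := (rep e, rep f).
apply: connect_trans ee' (connect_trans _ f'f); apply: connect_step_fconnect.
  by apply: connect_trans h0f'; rewrite fconnect_sym //; exact: tau_inj.
move=> g g_red; rewrite e'e f'f_side; symmetry; apply: side_vertex fe.
by apply: contraTneq irr => ->; apply: corner_reducible.
Qed.

Lemma incident_vof g r : incident (vof g) r =
  (r \in [:: rof g; rof (s g); rof (s (s g)); rof (s (s (s g)))]).
Proof.
apply/existsP/idP => [[h /andP[/eqP hg /eqP <-]]|].
  by case: (darts_at hg) => ->; rewrite !inE eqxx ?orbT.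
rewrite !inE => /or4P[] /eqP ->; [exists g | exists (s g) | exists (s (s g)) | exists (s (s (s g)))].
all: by rewrite ?vof_sigma !eqxx.
Qed.

Lemma irr_rof_uniq e : irreducibleb (vof e) ->
  uniq [:: rof e; rof (s e); rof (s (s e)); rof (s (s (s e)))].
Proof.
move/irreducibleP => irr.
have neq x y : vof x = vof e -> vof y = vof e -> x != y -> rof x != rof y.
  by move=> xe ye; apply: contra => /eqP rxy; apply/eqP; apply: irr.
rewrite /= !inE !negb_or !andbT.
apply/and3P; split; [apply/and3P; split | apply/andP; split |]; apply: neq; rewrite ?vof_sigma //.
- by rewrite eq_sym sigma_neq.
- by rewrite eq_sym sigma2_neq.
- by rewrite eq_sym sigma3_neq.
- exact: sigma_neq2.
- by rewrite eq_sym sigma2_neq.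
- by rewrite eq_sym sigma_neq.
Qed.

Local Open Scope ring_scope.

Section NullPattern.
Variables (k : kcol) (ver : vtx D -> reg D -> Zk k) (l : reg D -> Zk k).
Hypothesis ver_ok : is_version ver.
Hypothesis l_null : null_pattern ver l.

Lemma version_irr v : irreducible v ->
  exists2 c : Zk k, not_zero_divisor c & forall r, incident v r -> ver v r = c.
Proof.
move: ver ver_ok; case: k => [n|] ver' ver'_ok irr.
  by have [/(_ irr)[c [c_nzd cE]] _] := ver'_ok v; exists c.
by exists 1 => [y|r vr]; [rewrite mul1r | apply: ver'_ok; [|left]].
Qed.

Lemma version_red v r : ~ irreducible v -> incident v r -> ncorners v r = 1%N ->
  not_zero_divisor (ver v r).
Proof.
move: ver ver_ok; case: k => [n|] ver' ver'_ok red vr one; first exact: (ver'_ok v).2.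
by rewrite (ver'_ok v r vr (or_intror one)) => y; rewrite mul1r.
Qed.

Lemma sum_incident v (F : reg D -> Zk k) (rs : seq (reg D)) : uniq rs ->
  incident v =i rs -> \sum_r (if incident v r then F r else 0) = \sum_(r <- rs) F r.
Proof. by move=> rs_uniq vrs; rewrite -big_mkcond (big_uniq _ rs_uniq); apply: eq_bigl. Qed.

Lemma null_irr e : irreducibleb (vof e) ->
  l (rof e) + l (rof (s e)) + l (rof (s (s e))) + l (rof (s (s (s e)))) = 0.
Proof.
move=> irr; have [c c_nzd cE] := version_irr (elimT (irreducibleP _) irr).
have := l_null (vof e).
rewrite (eq_bigr (fun r => c * (if incident (vof e) r then l r else 0))) => [|r _]; last first.
  by rewrite /game_matrix; case: ifP => [/cE->|]; rewrite ?mulr0 ?mul0r.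
rewrite -mulr_sumr (sum_incident _ (irr_rof_uniq irr) (@incident_vof e)) => /c_nzd.
by rewrite !big_cons big_nil addr0 !addrA.
Qed.

Lemma ncorners1 h : (forall h', vof h' = vof h -> rof h' = rof h -> h' = h) ->
  ncorners (vof h) (rof h) = 1%N.
Proof.
move=> hP; rewrite /ncorners (_ : [set h' | _] = [set h]) ?cards1 //.
by apply/setP => h'; rewrite !inE; apply/andP/eqP => [[/eqP hv /eqP hr]|->]; [apply: hP | rewrite !eqxx].
Qed.

(* At a reducible crossing only three regions meet, two of them with a
   non-zero-divisor increment. *)
Lemma null_red g : rof g = rof (s (s g)) -> l (rof g) = 0 ->
  l (rof (s g)) = 0 <-> l (rof (s (s (s g)))) = 0.
Proof.
move=> g_red l0; set g1 := s g; set g3 := s (s g1).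
have d01 : rof g != rof g1 := rof_sigma_neq g.
have d03 : rof g != rof g3 by move: (rof_sigma_neq g3); rewrite /g3 /g1 sigma4 eq_sym.
have d13 : rof g1 != rof g3 := rof_sigma_sigma3_neq g_red.
have red : ~ irreducible (vof g) by move/irreducibleP; apply/negP; apply: corner_reducible.
have vg3 r : incident (vof g) r = (r \in [:: rof g; rof g1; rof g3]).
  by rewrite incident_vof !inE -g_red; case: (r == rof g).
have off0 h : vof h = vof g -> rof h != rof g -> h = g1 \/ h = g3.
  by case/darts_at=> ->; rewrite -?g_red ?eqxx //; [left|right].
have nzd h : vof h = vof g -> rof h != rof g -> not_zero_divisor (ver (vof g) (rof h)).
  move=> hg hr; have hE := off0 h hg hr; apply: version_red red _ _.
    by rewrite vg3 !inE; case: hE => ->; rewrite eqxx ?orbT.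
  rewrite -hg ncorners1 // => h'; rewrite hg => h'g h'h.
  have h'r : rof h' != rof g by rewrite h'h.
  by case: (off0 h' h'g h'r) hE h'h => -> [] -> // E; rewrite E eqxx in d13.
have := l_null (vof g); rewrite (eq_bigr (fun r => if incident (vof g) r then ver (vof g) r * l r else 0)) => [|r _]; last first.
  by rewrite /game_matrix; case: ifP; rewrite ?mul0r.
rewrite (sum_incident _ _ vg3) ?big_cons ?big_nil ?addr0 ?l0 ?mulr0 ?add0r; last first.
  by rewrite /= !inE !negb_or d01 d03 d13.
have g1g : vof g1 = vof g := vof_sigma g.
have g3g : vof g3 = vof g by rewrite /g3 !vof_sigma.
move=> sum0; split=> [l1|l3].
  by apply: (nzd g3 g3g); rewrite 1?eq_sym //; move: sum0; rewrite l1 mulr0 add0r.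
by apply: (nzd g1 g1g); rewrite 1?eq_sym //; move: sum0; rewrite l3 mulr0 addr0.
Qed.

Definition edge_sum h := l (rof h) + l (rof (a h)).

Lemma edge_sum_alpha h : edge_sum (a h) = edge_sum h.
Proof. by rewrite /edge_sum alphaK addrC. Qed.

Lemma edge_sum_partner e : ~~ irreducibleb (vof e) -> edge_sum (partner e) = edge_sum e.
Proof.
case/reducible_corner=> g ge g_red; have [p0 p1 p2 p3] := partnerE g_red.
by case: (darts_at (esym ge)) => ->; rewrite ?p0 ?p1 ?p2 ?p3 /edge_sum !rof_alpha !sigma4 -g_red addrC.
Qed.

(* Around an irreducible crossing the four values of l sum to zero, so the
   edge sum vanishes on the outgoing edge iff it does on the incoming one. *)
Lemma edge_sum_step u w : step_rel u w -> edge_sum u = 0 -> edge_sum w = 0.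
Proof.
case/orP=> /eqP->; last by rewrite edge_sum_alpha.
rewrite /step -(edge_sum_alpha u); move: (a u) => e /=; case: ifP => [irr|red]; last first.
  by rewrite edge_sum_partner ?red.
have := null_irr irr; rewrite /edge_sum !rof_alpha !sigma4.
move: (l (rof e)) (l (rof (s e))) (l (rof (s (s e)))) (l (rof (s (s (s e))))) => l0 l1 l2 l3 sum0 e0.
have -> : l2 + l1 = (l0 + l1 + l2 + l3) - (l0 + l3) by ring.
by rewrite sum0 e0 subr0.
Qed.

Lemma edge_sum_connect u w : connect step_rel u w -> edge_sum u = 0 -> edge_sum w = 0.
Proof.
case/connectP=> p up ->{w}; elim: p u up => [|z p IH] u //= /andP[uz zp] u0.
exact: IH zp (edge_sum_step uz u0).
Qed.

Definition vanishes_at (v : vtx D) : Prop := forall h, vof h = v -> l (rof h) = 0.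

Lemma edge_vanishing h : l (rof h) = 0 -> l (rof (a h)) = 0 -> vanishes_at (vof h).
Proof.
rewrite rof_alpha => l0 l3; have [irr|red] := boolP (irreducibleb (vof h)).
  have e0 f : vof f = vof h -> edge_sum f = 0.
    move=> fh; apply: edge_sum_connect (irr_vertex_linked irr fh) _.
    by rewrite /edge_sum rof_alpha l0 l3 addr0.
  have l1 : l (rof (s h)) = 0.
    by have := e0 _ (vof_sigma h); rewrite /edge_sum rof_alpha sigma4 l0 addr0.
  have l2 : l (rof (s (s h))) = 0.
    by have := e0 _ (etrans (vof_sigma _) (vof_sigma h)); rewrite /edge_sum rof_alpha sigma4 l1 addr0.
  by move=> f /darts_at[]->.
have [g gh g_red] := reducible_corner red.
have [l0g l13] : l (rof g) = 0 /\ (l (rof (s g)) = 0 \/ l (rof (s (s (s g)))) = 0).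
  by case: (darts_at (esym gh)) l0 l3 => ->; rewrite ?sigma4 -?g_red; auto.
have [l1g l3g] : l (rof (s g)) = 0 /\ l (rof (s (s (s g)))) = 0.
  by have := null_red g_red l0g; case: l13; tauto.
by rewrite -gh => f /darts_at[]->; rewrite -?g_red.
Qed.

Lemma vanishing_everywhere h : vanishes_at (vof h) -> forall x, vanishes_at (vof x).
Proof.
move=> hv x; have /connectP[p hp ->] := knot_map_connected h x.
elim: p h hp hv => [|z p IH] h //= /andP[hz zp] hv; apply: IH zp _.
case/orP: hz => [/orP[]|] /eqP zE.
- by rewrite zE vof_sigma.
- by rewrite zE vof_sigma in hv.
- rewrite zE; apply: edge_vanishing; last by rewrite alphaK; apply: hv.
  by rewrite rof_alpha; apply: hv; rewrite !vof_sigma.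
Qed.
End NullPattern.
End KnotDiagram.

Local Open Scope ring_scope.

Theorem mainTheorem6 (D : diagram) (k : kcol)
  (a : vtx D -> reg D -> Zk k) (l : reg D -> Zk k) (r1 r2 : reg D) :
  knot_diagram D -> valid_k k -> is_version a ->
  null_pattern a l -> adjacent r1 r2 -> l r1 = 0 -> l r2 = 0 ->
  forall r, l r = 0.
Proof.
move=> KD _ a_ok l_null [h [hr1 hr2]] l1 l2 r.
have [h' <-] := rof_surj KD r.
have h_vanishing : vanishes_at l (vof h).
  by apply: (edge_vanishing KD a_ok l_null); rewrite ?hr1 ?hr2.
exact: (vanishing_everywhere KD a_ok l_null h_vanishing (erefl (vof h'))).
Qed.
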